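(* Suppose that for every binary relation $R$ on $\mathbb{N}$, every $R$-strongly normalizing element of $\mathbb{N}$ is $R$-weakly normalizing. Then the law of excluded middle holds: for every proposition $P$, $P\lor\lnot P$.
   Context: Work in constructive (intuitionistic) logic / Martin-Löf type theory (Agda) without excluded middle or other axioms. For a relation $R$ on a set $A$ write $a\to b$ for $R\,a\,b$ and $\to^*$ for its reflexive–transitive closure. $a$ is a normal form iff there is no $b$ with $a\to b$. $a$ is weakly normalizing iff $a\to^* b$ for some normal form $b$. Strong normalization is defined inductively: $a$ is strongly normalizing if every $b$ with $a\to b$ is strongly normalizing. *)

Inductive rtc {A : Type} (R : A -> A -> Prop) : A -> A -> Prop :=
| rtc_refl : forall a, rtc R a a
| rtc_step : forall a b c, R a b -> rtc R b c -> rtc R a c.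

Definition normal_form {A : Type} (R : A -> A -> Prop) (a : A) : Prop :=
  ~ (exists b, R a b).

Definition weakly_normalizing {A : Type} (R : A -> A -> Prop) (a : A) : Prop :=
  exists b, rtc R a b /\ normal_form R b.

Inductive strongly_normalizing {A : Type} (R : A -> A -> Prop) : A -> Prop :=
| sn_intro : forall a, (forall b, R a b -> strongly_normalizing R b) ->
             strongly_normalizing R a.


(* Take the relation with the single edge a -> b, present exactly when P holds.
   It is trivially strongly normalizing from a.  A normal form reached from a is
   either a itself, whose normality refutes P, or the end of a genuine step,
   which witnesses P. *)

Definition guarded_step {A : Type} (P : Prop) (a b : A) (x y : A) : Prop :=
  x = a /\ y = b /\ P.

Lemma guarded_step_sn {A : Type} (P : Prop) (a b : A) :
  a <> b -> strongly_normalizing (guarded_step P a b) a.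
Proof.
  intros Hab; constructor; intros y [_ [-> _]].
  constructor; intros z [Hba _]; congruence.
Qed.

Lemma guarded_step_wn_decides {A : Type} (P : Prop) (a b : A) :
  weakly_normalizing (guarded_step P a b) a -> P \/ ~ P.
Proof.
  intros [c [Hac Hnf]]; destruct Hac as [x | x y z [_ [_ p]] _].
  - right; intros p; apply Hnf; exists b; now repeat split.
  - left; exact p.
Qed.

Theorem mainTheorem12 :
  (forall (R : nat -> nat -> Prop) (a : nat),
      strongly_normalizing R a -> weakly_normalizing R a) ->
  forall P : Prop, P \/ ~ P.
Proof.
  intros sn_wn P.
  apply (guarded_step_wn_decides P 0 1), sn_wn, guarded_step_sn; discriminate.
Qed.
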